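(* Let $\alpha$ be an arbitrary constant and let $u=u(x,y,z,t)$ be a smooth function with $u_x\neq 0$. Put $m=(u_y-u_z)/u_x$ and $n=(u_z-u_t)/u_x$, and suppose \[ D_t(m)+\alpha\, m\, D_x(n)-D_z(n)-\alpha\, n\, D_x(m)=0. \qquad (\ast) \] For a smooth function $U$ put $\delta m=\frac{U_y-U_z}{u_x}-\frac{(u_y-u_z)U_x}{u_x^2}$, $\delta n=\frac{U_z-U_t}{u_x}-\frac{(u_z-u_t)U_x}{u_x^2}$ and \[ \ell(U)=D_t(\delta m)+\alpha\,\delta m\, D_x(n)+\alpha\, m\, D_x(\delta n)-D_z(\delta n)-\alpha\,\delta n\, D_x(m)-\alpha\, n\, D_x(\delta m), \] and call $U$ a symmetry of $(\ast)$ (at $u$) if $\ell(U)=0$. Let \[ f_1=\frac{\alpha(u_{xy}-u_{xz})-u_{xz}}{u_x},\qquad f_2=\frac{\alpha(u_{xz}-u_{xt})-u_{xt}}{u_x}, \] and consider the relations, for an unknown function $\tilde U$, \[ \begin{aligned} \tilde U_z-\alpha\frac{u_y-u_z}{u_x}\tilde U_x+f_1\tilde U&=-(1+\alpha)\frac{u_y-u_z}{u_x}U_x+U_y+f_1U,\\ \tilde U_t+\alpha\frac{u_t-u_z}{u_x}\tilde U_x+f_2\tilde U&=(1+\alpha)\frac{u_t-u_z}{u_x}U_x+U_z+f_2U. \end{aligned}\qquad (\ast\ast) \] Then these relations define a recursion operator for $(\ast)$, namely: (a) if $u$ satisfies $(\ast)$ and $\ell(U)=0$, then the system $(\ast\ast)$,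 regarded as an overdetermined first-order system for $\tilde U$, is compatible (its cross-differentiation compatibility condition holds identically by virtue of $(\ast)$, $\ell(U)=0$ and their differential consequences); and (b) if $u$ satisfies $(\ast)$, $\ell(U)=0$, and $\tilde U$ satisfies $(\ast\ast)$, then $\ell(\tilde U)=0$, i.e. $\tilde U$ is again a symmetry of $(\ast)$.
   Context: Subscripts denote partial derivatives and $D_x,D_y,D_z,D_t$ denote total derivatives. $\ell(U)$ is the linearization of the left-hand side of $(\ast)$, i.e. the coefficient of $\varepsilon$ after replacing $u$ by $u+\varepsilon U$. Symmetries may be nonlocal, i.e. $U,\tilde U$ are arbitrary smooth functions satisfying the stated equations. Equation $(\ast)$ admits the Lax pair $\psi_y=\lambda\psi_z+c\,m\,\psi_x$, $\psi_z=c\,n\,\psi_x+\lambda\psi_t$ with $c=1+\alpha-\lambda\alpha$ and spectral parameter $\lambda$. *)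

From Stdlib Require Import Reals List ClassicalEpsilon.
Open Scope R_scope.

Definition fn := R -> R -> R -> R -> R.

Inductive var := VX | VY | VZ | VT.

Definition line (v : var) (f : fn) (x y z t : R) : R -> R :=
  match v with
  | VX => fun s => f s y z t
  | VY => fun s => f x s z t
  | VZ => fun s => f x y s t
  | VT => fun s => f x y z s
  end.

Definition coord (v : var) (x y z t : R) : R :=
  match v with VX => x | VY => y | VZ => z | VT => t end.

(** partial derivative w.r.t. v (the true derivative whenever it exists; 0 otherwise) *)
Definition pd (v : var) (f : fn) : fn := fun x y z t =>
  match excluded_middle_informative
          (exists l, derivable_pt_lim (line v f x y z t) (coord v x y z t) l) with
  | left H => proj1_sig (constructive_indefinite_description _ H)
  | right _ => 0
  end.

Definition PDx := pd VX.
Definition PDy := pd VY.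
Definition PDz := pd VZ.
Definition PDt := pd VT.

Definition iter_pd (vs : list var) (f : fn) : fn := fold_right pd f vs.

Definition open4 (O : R -> R -> R -> R -> Prop) : Prop :=
  forall x y z t, O x y z t -> exists r, 0 < r /\
    forall x' y' z' t', Rabs (x' - x) < r -> Rabs (y' - y) < r ->
      Rabs (z' - z) < r -> Rabs (t' - t) < r -> O x' y' z' t'.

Definition cont4_at (f : fn) (x y z t : R) : Prop :=
  forall eps, 0 < eps -> exists delta, 0 < delta /\
    forall x' y' z' t', Rabs (x' - x) < delta -> Rabs (y' - y) < delta ->
      Rabs (z' - z) < delta -> Rabs (t' - t) < delta ->
      Rabs (f x' y' z' t' - f x y z t) < eps.

Definition smooth_on (O : R -> R -> R -> R -> Prop) (f : fn) : Prop :=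
  forall vs : list var, forall x y z t, O x y z t ->
    cont4_at (iter_pd vs f) x y z t /\
    forall v, exists l,
      derivable_pt_lim (line v (iter_pd vs f) x y z t) (coord v x y z t) l.

Definition m_of (u : fn) : fn := fun x y z t =>
  (PDy u x y z t - PDz u x y z t) / PDx u x y z t.
Definition n_of (u : fn) : fn := fun x y z t =>
  (PDz u x y z t - PDt u x y z t) / PDx u x y z t.

Definition eq_star (alpha : R) (u : fn) : fn := fun x y z t =>
  PDt (m_of u) x y z t + alpha * m_of u x y z t * PDx (n_of u) x y z t
  - PDz (n_of u) x y z t - alpha * n_of u x y z t * PDx (m_of u) x y z t.

Definition delta_m (u U : fn) : fn := fun x y z t =>
  (PDy U x y z t - PDz U x y z t) / PDx u x y z t
  - (PDy u x y z t - PDz u x y z t) * PDx U x y z t / (PDx u x y z t) ^ 2.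
Definition delta_n (u U : fn) : fn := fun x y z t =>
  (PDz U x y z t - PDt U x y z t) / PDx u x y z t
  - (PDz u x y z t - PDt u x y z t) * PDx U x y z t / (PDx u x y z t) ^ 2.

Definition ell (alpha : R) (u U : fn) : fn := fun x y z t =>
  PDt (delta_m u U) x y z t
  + alpha * delta_m u U x y z t * PDx (n_of u) x y z t
  + alpha * m_of u x y z t * PDx (delta_n u U) x y z t
  - PDz (delta_n u U) x y z t
  - alpha * delta_n u U x y z t * PDx (m_of u) x y z t
  - alpha * n_of u x y z t * PDx (delta_m u U) x y z t.

Definition f1 (alpha : R) (u : fn) : fn := fun x y z t =>
  (alpha * (PDx (PDy u) x y z t - PDx (PDz u) x y z t) - PDx (PDz u) x y z t)
  / PDx u x y z t.
Definition f2 (alpha : R) (u : fn) : fn := fun x y z t =>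
  (alpha * (PDx (PDz u) x y z t - PDx (PDt u) x y z t) - PDx (PDt u) x y z t)
  / PDx u x y z t.

Definition rhs1 (alpha : R) (u U : fn) : fn := fun x y z t =>
  - (1 + alpha) * ((PDy u x y z t - PDz u x y z t) / PDx u x y z t) * PDx U x y z t
  + PDy U x y z t + f1 alpha u x y z t * U x y z t.
Definition rhs2 (alpha : R) (u U : fn) : fn := fun x y z t =>
  (1 + alpha) * ((PDt u x y z t - PDz u x y z t) / PDx u x y z t) * PDx U x y z t
  + PDz U x y z t + f2 alpha u x y z t * U x y z t.

Definition lhs1 (alpha : R) (u W : fn) : fn := fun x y z t =>
  PDz W x y z t
  - alpha * ((PDy u x y z t - PDz u x y z t) / PDx u x y z t) * PDx W x y z t
  + f1 alpha u x y z t * W x y z t.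
Definition lhs2 (alpha : R) (u W : fn) : fn := fun x y z t =>
  PDt W x y z t
  + alpha * ((PDt u x y z t - PDz u x y z t) / PDx u x y z t) * PDx W x y z t
  + f2 alpha u x y z t * W x y z t.

(** ( ** ) solved for the z- and t-derivatives:
      W_z = cPx W_x + cP0 W + rhs1,   W_t = cQx W_x + cQ0 W + rhs2 *)
Definition cPx (alpha : R) (u : fn) : fn := fun x y z t =>
  alpha * ((PDy u x y z t - PDz u x y z t) / PDx u x y z t).
Definition cP0 (alpha : R) (u : fn) : fn := fun x y z t => - f1 alpha u x y z t.
Definition cQx (alpha : R) (u : fn) : fn := fun x y z t =>
  - (alpha * ((PDt u x y z t - PDz u x y z t) / PDx u x y z t)).
Definition cQ0 (alpha : R) (u : fn) : fn := fun x y z t => - f2 alpha u x y z t.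

Definition Pz (alpha : R) (u U W : fn) : fn := fun x y z t =>
  cPx alpha u x y z t * PDx W x y z t + cP0 alpha u x y z t * W x y z t
  + rhs1 alpha u U x y z t.
Definition Qt (alpha : R) (u U W : fn) : fn := fun x y z t =>
  cQx alpha u x y z t * PDx W x y z t + cQ0 alpha u x y z t * W x y z t
  + rhs2 alpha u U x y z t.

(** Cross-differentiation compatibility expression of ( ** ):
    D_t(W_z) - D_z(W_t), where W_z, W_t are replaced by their values from
    ( ** ) and W_{xt}, W_{xz} by the x-derivatives of those values.
    It depends only on the jet (W, W_x, W_xx) of the unknown W; the system
    is compatible iff it vanishes for every such jet, i.e. for every smooth W. *)
Definition compat_expr (alpha : R) (u U W : fn) : fn := fun x y z t =>
  (PDt (cPx alpha u) x y z t * PDx W x y z t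
   + cPx alpha u x y z t * PDx (Qt alpha u U W) x y z t
   + PDt (cP0 alpha u) x y z t * W x y z t
   + cP0 alpha u x y z t * Qt alpha u U W x y z t
   + PDt (rhs1 alpha u U) x y z t)
  - (PDz (cQx alpha u) x y z t * PDx W x y z t
     + cQx alpha u x y z t * PDx (Pz alpha u U W) x y z t
     + PDz (cQ0 alpha u) x y z t * W x y z t
     + cQ0 alpha u x y z t * Pz alpha u U W x y z t
     + PDz (rhs2 alpha u U) x y z t).

(** Both parts are explicit differential identities. Let E be the left-hand side
    of ( * ), H1 and H2 the residuals lhs_i - rhs_i of ( ** ), and
    [p, q] := p D_x q - q D_x p. Then
      compat_expr = u_x (l(U) + alpha [(U - W)/u_x, E]),
      l(Ut) = (D_y H2 - D_z H1 + (1 + alpha) (n D_x H1 - m D_x H2) - f2 H1 + f1 H2)/u_x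
              + (1 + alpha) [(Ut - U)/u_x, E],
    and everything on the right vanishes on solutions; (b) does not even need
    l(U) = 0, which is forced by the solvability of ( ** ). *)

From Pilot Require Import Defs.
From Stdlib Require Import Reals List Classical ClassicalEpsilon Lra Permutation.
From Coquelicot Require Import Coquelicot.
Import ListNotations.
Open Scope R_scope.

Lemma Rabs_minus_self_lt c r : 0 < r -> Rabs (c - c) < r.
Proof. intros Hr. rewrite Rminus_eq_0, Rabs_R0. exact Hr. Qed.

Lemma derivable_pd v f x y z t :
  (exists l, derivable_pt_lim (line v f x y z t) (coord v x y z t) l) ->
  derivable_pt_lim (line v f x y z t) (coord v x y z t) (pd v f x y z t).
Proof.
  intros H. unfold pd.
  destruct excluded_middle_informative as [H'|H']; [|contradiction].
  exact (proj2_sig (constructive_indefinite_description _ H')).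
Qed.

Lemma pd_eq v f x y z t l :
  derivable_pt_lim (line v f x y z t) (coord v x y z t) l -> pd v f x y z t = l.
Proof.
  intros H. exact (uniqueness_limite _ _ _ _ (derivable_pd v f x y z t (ex_intro _ l H)) H).
Qed.

Lemma derivable_pt_lim_ball (F G : R -> R) c c0 r l : Rabs (c - c0) < r ->
  (forall s, Rabs (s - c0) < r -> F s = G s) ->
  derivable_pt_lim F c l -> derivable_pt_lim G c l.
Proof.
  intros Hc HFG H eps Heps. destruct (H eps Heps) as [del Hdel].
  assert (Hm : 0 < Rmin del (r - Rabs (c - c0))) by (apply Rmin_pos; [apply cond_pos | lra]).
  exists (mkposreal _ Hm). intros h Hh0 Hh. simpl in Hh.
  assert (Hh1 := Rmin_l del (r - Rabs (c - c0))).
  assert (Hh2 := Rmin_r del (r - Rabs (c - c0))).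
  assert (Hin : forall s, Rabs (s - c) < r - Rabs (c - c0) -> Rabs (s - c0) < r).
  { intros s Hs. replace (s - c0) with ((s - c) + (c - c0)) by ring.
    eapply Rle_lt_trans; [apply Rabs_triang | lra]. }
  rewrite <- !HFG.
  - apply Hdel; auto. lra.
  - apply Hin, Rabs_minus_self_lt. lra.
  - apply Hin. replace (c + h - c) with h by ring. lra.
Qed.

Lemma pd_ext_on O v f g x y z t : open4 O ->
  (forall X Y Z T, O X Y Z T -> f X Y Z T = g X Y Z T) -> O x y z t ->
  pd v f x y z t = pd v g x y z t.
Proof.
  intros HO Hfg Hp. destruct (HO _ _ _ _ Hp) as [r [Hr Hball]].
  assert (Hline : forall s, Rabs (s - coord v x y z t) < r ->
                    line v f x y z t s = line v g x y z t s).
  { intros s Hs. destruct v; simpl in *; apply Hfg, Hball;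
      first [exact Hs | apply Rabs_minus_self_lt, Hr]. }
  assert (Hc := Rabs_minus_self_lt (coord v x y z t) r Hr).
  destruct (classic (exists l, derivable_pt_lim (line v f x y z t) (coord v x y z t) l))
    as [[l Hl]|Hn].
  - rewrite (pd_eq _ _ _ _ _ _ _ Hl). symmetry. apply pd_eq.
    exact (derivable_pt_lim_ball _ _ _ _ _ _ Hc Hline Hl).
  - unfold pd. destruct excluded_middle_informative as [|_]; [contradiction|].
    destruct excluded_middle_informative as [[l Hl]|_]; [|reflexivity].
    exfalso. apply Hn. exists l. refine (derivable_pt_lim_ball _ _ _ _ _ _ Hc _ Hl).
    intros s Hs. symmetry. apply Hline, Hs.
Qed.

Lemma pd_zero_on O v f x y z t : open4 O ->
  (forall X Y Z T, O X Y Z T -> f X Y Z T = 0) -> O x y z t -> pd v f x y z t = 0.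
Proof.
  intros HO Hf Hp. rewrite (pd_ext_on O v f (fun _ _ _ _ => 0) x y z t HO Hf Hp).
  apply pd_eq. destruct v; apply derivable_pt_lim_const.
Qed.

Lemma iter_pd_app ws vs f : iter_pd ws (iter_pd vs f) = iter_pd (ws ++ vs) f.
Proof. unfold iter_pd. rewrite fold_right_app. reflexivity. Qed.

Lemma smooth_on_iter_pd O f vs : smooth_on O f -> smooth_on O (iter_pd vs f).
Proof. intros H ws x y z t Hp. rewrite iter_pd_app. apply H, Hp. Qed.

Lemma derivable_pd_smooth O f v x y z t : smooth_on O f -> O x y z t ->
  derivable_pt_lim (line v f x y z t) (coord v x y z t) (pd v f x y z t).
Proof. intros H Hp. apply derivable_pd, (proj2 (H [] x y z t Hp)). Qed.

(** * Clairaut's theorem *)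

Lemma derivable_Derive (F : R -> R) c l : derivable_pt_lim F c l -> Derive F c = l.
Proof. intros H. apply is_derive_unique, is_derive_Reals, H. Qed.

Lemma schwarz_plane (h hA hB hAB hBA : R -> R -> R) x0 y0 r : 0 < r ->
  (forall s1 s2, Rabs (s1 - x0) < r -> Rabs (s2 - y0) < r ->
     derivable_pt_lim (fun s => h s s2) s1 (hA s1 s2) /\
     derivable_pt_lim (fun s => h s1 s) s2 (hB s1 s2) /\
     derivable_pt_lim (fun s => hB s s2) s1 (hAB s1 s2) /\
     derivable_pt_lim (fun s => hA s1 s) s2 (hBA s1 s2)) ->
  continuity_2d_pt hAB x0 y0 -> continuity_2d_pt hBA x0 y0 ->
  hAB x0 y0 = hBA x0 y0.
Proof.
  intros Hr Hd CAB CBA.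
  assert (DAB : forall u v, Rabs (u - x0) < r -> Rabs (v - y0) < r ->
     derivable_pt_lim (fun s => Derive (fun t => h s t) v) u (hAB u v)).
  { intros u v Hu Hv.
    refine (derivable_pt_lim_ball _ _ _ _ _ _ Hu _ (proj1 (proj2 (proj2 (Hd u v Hu Hv))))).
    intros s Hs. symmetry. apply derivable_Derive, (Hd s v Hs Hv). }
  assert (DBA : forall u v, Rabs (u - x0) < r -> Rabs (v - y0) < r ->
     derivable_pt_lim (fun s => Derive (fun t => h t s) u) v (hBA u v)).
  { intros u v Hu Hv.
    refine (derivable_pt_lim_ball _ _ _ _ _ _ Hv _ (proj2 (proj2 (proj2 (Hd u v Hu Hv))))).
    intros s Hs. symmetry. apply derivable_Derive, (Hd u s Hu Hs). }
  assert (H0 := Rabs_minus_self_lt x0 r Hr). assert (H0' := Rabs_minus_self_lt y0 r Hr).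
  rewrite <- (derivable_Derive _ _ _ (DAB x0 y0 H0 H0')),
          <- (derivable_Derive _ _ _ (DBA x0 y0 H0 H0')).
  apply Schwarz.
  - exists (mkposreal r Hr). intros u v Hu Hv.
    destruct (Hd u v Hu Hv) as [HA [HB _]].
    repeat split; eexists; apply is_derive_Reals; eauto.
  - apply (continuity_2d_pt_ext_loc hAB); [|exact CAB].
    exists (mkposreal r Hr). intros u v Hu Hv. symmetry. apply derivable_Derive, DAB; assumption.
  - apply (continuity_2d_pt_ext_loc hBA); [|exact CBA].
    exists (mkposreal r Hr). intros u v Hu Hv. symmetry. apply derivable_Derive, DBA; assumption.
Qed.

Definition var_eq_dec (a b : Defs.var) : {a = b} + {a <> b}.
Proof. decide equality. Defined.

Definition upd {A} (v : Defs.var) (s : R) (f : R -> R -> R -> R -> A) : R -> R -> R -> R -> A :=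
  match v with
  | VX => fun _ y z t => f s y z t
  | VY => fun x _ z t => f x s z t
  | VZ => fun x y _ t => f x y s t
  | VT => fun x y z _ => f x y z s
  end.

Lemma upd2_coord {A} a b (f : R -> R -> R -> R -> A) x y z t :
  upd a (coord a x y z t) (upd b (coord b x y z t) f) x y z t = f x y z t.
Proof. destruct a, b; reflexivity. Qed.

Lemma upd2_ball (P : R -> R -> R -> R -> Prop) a b r x y z t s1 s2 : 0 < r ->
  (forall x' y' z' t', Rabs (x' - x) < r -> Rabs (y' - y) < r ->
     Rabs (z' - z) < r -> Rabs (t' - t) < r -> P x' y' z' t') ->
  Rabs (s1 - coord a x y z t) < r -> Rabs (s2 - coord b x y z t) < r ->
  upd a s1 (upd b s2 P) x y z t.
Proof.
  intros Hr HP H1 H2.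
  destruct a, b; simpl in *; apply HP; first [assumption | apply Rabs_minus_self_lt, Hr].
Qed.

Lemma upd2_derivable O F a b x y z t s1 s2 : a <> b -> smooth_on O F ->
  upd a s1 (upd b s2 O) x y z t ->
  derivable_pt_lim (fun s => upd a s (upd b s2 F) x y z t) s1
    (upd a s1 (upd b s2 (pd a F)) x y z t) /\
  derivable_pt_lim (fun s => upd a s1 (upd b s F) x y z t) s2
    (upd a s1 (upd b s2 (pd b F)) x y z t).
Proof.
  intros Hab HF Hp.
  assert (Ha := fun X Y Z T => derivable_pd_smooth O F a X Y Z T HF).
  assert (Hb := fun X Y Z T => derivable_pd_smooth O F b X Y Z T HF).
  destruct a, b; try congruence; (split; [exact (Ha _ _ _ _ Hp) | exact (Hb _ _ _ _ Hp)]).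
Qed.

Lemma upd2_continuity F a b x y z t : cont4_at F x y z t ->
  continuity_2d_pt (fun s1 s2 => upd a s1 (upd b s2 F) x y z t)
    (coord a x y z t) (coord b x y z t).
Proof.
  intros HF eps. destruct (HF eps (cond_pos eps)) as [d [Hd Hball]].
  exists (mkposreal d Hd). intros s1 s2 H1 H2. simpl in H1, H2. rewrite upd2_coord.
  assert (H := upd2_ball (fun X Y Z T => Rabs (F X Y Z T - F x y z t) < eps) a b d x y z t s1 s2
                Hd Hball H1 H2).
  destruct a, b; exact H.
Qed.

Theorem pd_comm O F a b x y z t : open4 O -> smooth_on O F -> O x y z t ->
  pd a (pd b F) x y z t = pd b (pd a F) x y z t.
Proof.
  intros HO HF Hp. destruct (var_eq_dec a b) as [<-|Hab]; [reflexivity|].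
  destruct (HO _ _ _ _ Hp) as [r [Hr Hball]].
  rewrite <- (upd2_coord a b (pd a (pd b F))), <- (upd2_coord a b (pd b (pd a F))).
  apply (schwarz_plane (fun s1 s2 => upd a s1 (upd b s2 F) x y z t)
           (fun s1 s2 => upd a s1 (upd b s2 (pd a F)) x y z t)
           (fun s1 s2 => upd a s1 (upd b s2 (pd b F)) x y z t)
           (fun s1 s2 => upd a s1 (upd b s2 (pd a (pd b F))) x y z t)
           (fun s1 s2 => upd a s1 (upd b s2 (pd b (pd a F))) x y z t)
           (coord a x y z t) (coord b x y z t) r Hr).
  - intros s1 s2 H1 H2. assert (Hq := upd2_ball O a b r x y z t s1 s2 Hr Hball H1 H2).
    destruct (upd2_derivable O F a b x y z t s1 s2 Hab HF Hq) as [DA DB].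
    destruct (upd2_derivable O (pd b F) a b x y z t s1 s2 Hab (smooth_on_iter_pd O F [b] HF) Hq)
      as [DBA _].
    destruct (upd2_derivable O (pd a F) a b x y z t s1 s2 Hab (smooth_on_iter_pd O F [a] HF) Hq)
      as [_ DAB].
    repeat split; assumption.
  - apply upd2_continuity, (HF [a; b] x y z t Hp).
  - apply upd2_continuity, (HF [b; a] x y z t Hp).
Qed.

Definition var_rank (v : Defs.var) : nat :=
  match v with VX => 0 | VY => 1 | VZ => 2 | VT => 3 end.

Fixpoint insert_var (v : Defs.var) (vs : list Defs.var) : list Defs.var :=
  match vs with
  | [] => [v]
  | w :: ws => if Nat.leb (var_rank v) (var_rank w) then v :: vs else w :: insert_var v ws
  end.

Lemma insert_var_perm v vs : Permutation (v :: vs) (insert_var v vs).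
Proof.
  induction vs as [|w ws IH]; simpl; [reflexivity|].
  destruct (Nat.leb (var_rank v) (var_rank w)); [reflexivity|].
  rewrite perm_swap. apply perm_skip, IH.
Qed.

Lemma iter_pd_perm O f vs ws : open4 O -> smooth_on O f -> Permutation vs ws ->
  forall x y z t, O x y z t -> iter_pd vs f x y z t = iter_pd ws f x y z t.
Proof.
  intros HO Hf HP. induction HP; intros x' y' z' t' Hp; simpl.
  - reflexivity.
  - apply (pd_ext_on O); auto.
  - apply (pd_comm O); auto. apply smooth_on_iter_pd, Hf.
  - rewrite IHHP1, IHHP2; auto.
Qed.

(** * A verified symbolic differentiator

    Derivatives of the atoms [iter_pd vs f] keep [vs] sorted, which is sound for
    smooth [f] by Clairaut's theorem; equal mixed partials are then syntactically
    equal, so identities between derivatives reduce to field identities. *)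

Inductive expr :=
| EAtom (f : fn) (vs : list Defs.var)
| ECst (c : R)
| EAdd (a b : expr) | ESub (a b : expr) | EMul (a b : expr) | EDiv (a b : expr)
| EOpp (a : expr) | EPow (a : expr) (n : nat).

Fixpoint eval (e : expr) : fn :=
  match e with
  | EAtom f vs => iter_pd vs f
  | ECst c => fun _ _ _ _ => c
  | EAdd a b => fun x y z t => eval a x y z t + eval b x y z t
  | ESub a b => fun x y z t => eval a x y z t - eval b x y z t
  | EMul a b => fun x y z t => eval a x y z t * eval b x y z t
  | EDiv a b => fun x y z t => eval a x y z t / eval b x y z t
  | EOpp a => fun x y z t => - eval a x y z t
  | EPow a n => fun x y z t => eval a x y z t ^ n
  end.

Fixpoint dexpr (v : Defs.var) (e : expr) : expr :=
  match e with
  | EAtom f vs => EAtom f (insert_var v vs)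
  | ECst _ => ECst 0
  | EAdd a b => EAdd (dexpr v a) (dexpr v b)
  | ESub a b => ESub (dexpr v a) (dexpr v b)
  | EMul a b => EAdd (EMul (dexpr v a) b) (EMul a (dexpr v b))
  | EDiv a b => EDiv (ESub (EMul (dexpr v a) b) (EMul (dexpr v b) a)) (EMul b b)
  | EOpp a => EOpp (dexpr v a)
  | EPow a n => EMul (EMul (ECst (INR n)) (EPow a (pred n))) (dexpr v a)
  end.

Fixpoint wf_at (O : R -> R -> R -> R -> Prop) (x y z t : R) (e : expr) : Prop :=
  match e with
  | EAtom f _ => smooth_on O f
  | ECst _ => True
  | EAdd a b | ESub a b | EMul a b => wf_at O x y z t a /\ wf_at O x y z t b
  | EDiv a b => wf_at O x y z t a /\ wf_at O x y z t b /\ eval b x y z t <> 0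
  | EOpp a | EPow a _ => wf_at O x y z t a
  end.

Definition xbracket (p q : expr) : expr := ESub (EMul p (dexpr VX q)) (EMul (dexpr VX p) q).

Lemma derivable_eval O v x y z t e : open4 O -> O x y z t -> wf_at O x y z t e ->
  derivable_pt_lim (line v (eval e) x y z t) (coord v x y z t) (eval (dexpr v e) x y z t).
Proof.
  intros HO Hp. induction e; simpl; intros Hw.
  - replace (iter_pd (insert_var v vs) f x y z t) with (pd v (iter_pd vs f) x y z t).
    + apply (derivable_pd_smooth O); [apply smooth_on_iter_pd|]; assumption.
    + apply (iter_pd_perm O f (v :: vs)); auto. apply insert_var_perm.
  - destruct v; apply derivable_pt_lim_const.
  - destruct Hw as [H1 H2].
    destruct v; exact (derivable_pt_lim_plus _ _ _ _ _ (IHe1 H1) (IHe2 H2)).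
  - destruct Hw as [H1 H2].
    destruct v; exact (derivable_pt_lim_minus _ _ _ _ _ (IHe1 H1) (IHe2 H2)).
  - destruct Hw as [H1 H2].
    destruct v; exact (derivable_pt_lim_mult _ _ _ _ _ (IHe1 H1) (IHe2 H2)).
  - destruct Hw as [H1 [H2 H3]].
    destruct v; exact (derivable_pt_lim_div _ _ _ _ _ (IHe1 H1) (IHe2 H2) H3).
  - destruct v; exact (derivable_pt_lim_opp _ _ _ (IHe Hw)).
  - destruct v; exact (derivable_pt_lim_comp _ (fun s => s ^ n) _ _ _ (IHe Hw)
                         (derivable_pt_lim_pow _ n)).
Qed.

Lemma pd_eval O v e x y z t : open4 O -> O x y z t -> wf_at O x y z t e ->
  pd v (eval e) x y z t = eval (dexpr v e) x y z t.
Proof. intros HO Hp Hw. apply pd_eq, (derivable_eval O); assumption. Qed.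

Lemma dexpr_vanish_on O v e x y z t : open4 O -> O x y z t -> wf_at O x y z t e ->
  (forall X Y Z T, O X Y Z T -> eval e X Y Z T = 0) -> eval (dexpr v e) x y z t = 0.
Proof.
  intros HO Hp Hw He. rewrite <- (pd_eval O) by assumption. apply (pd_zero_on O); assumption.
Qed.

Lemma xbracket_vanish_on O p q x y z t : open4 O -> O x y z t -> wf_at O x y z t q ->
  (forall X Y Z T, O X Y Z T -> eval q X Y Z T = 0) -> eval (xbracket p q) x y z t = 0.
Proof.
  intros HO Hp Hw Hq. unfold xbracket. cbn [eval].
  rewrite (dexpr_vanish_on O VX q), Hq by assumption. ring.
Qed.

(** * The equation and the operator as formal expressions

    Each [eval (Reified.c ...)] is convertible to the homonymous definition [c]
    of the statement, except that derivatives taken inside [eq_star], [ell] and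
    [compat_expr] are formal ([dexpr]) instead of [pd]. *)

Module Reified.
Section Exprs.
Variables (a : R) (u U W : fn).

Definition ux := EAtom u [VX].
Definition m_of := EDiv (ESub (EAtom u [VY]) (EAtom u [VZ])) ux.
Definition n_of := EDiv (ESub (EAtom u [VZ]) (EAtom u [VT])) ux.
Definition tz_of := EDiv (ESub (EAtom u [VT]) (EAtom u [VZ])) ux.
Definition delta_m := ESub (EDiv (ESub (EAtom U [VY]) (EAtom U [VZ])) ux)
  (EDiv (EMul (ESub (EAtom u [VY]) (EAtom u [VZ])) (EAtom U [VX])) (EPow ux 2)).
Definition delta_n := ESub (EDiv (ESub (EAtom U [VZ]) (EAtom U [VT])) ux)
  (EDiv (EMul (ESub (EAtom u [VZ]) (EAtom u [VT])) (EAtom U [VX])) (EPow ux 2)).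
Definition f1 := EDiv (ESub (EMul (ECst a) (ESub (EAtom u [VX; VY]) (EAtom u [VX; VZ])))
  (EAtom u [VX; VZ])) ux.
Definition f2 := EDiv (ESub (EMul (ECst a) (ESub (EAtom u [VX; VZ]) (EAtom u [VX; VT])))
  (EAtom u [VX; VT])) ux.
Definition rhs1 := EAdd (EAdd (EMul (EMul (EOpp (EAdd (ECst 1) (ECst a))) m_of) (EAtom U [VX]))
  (EAtom U [VY])) (EMul f1 (EAtom U [])).
Definition rhs2 := EAdd (EAdd (EMul (EMul (EAdd (ECst 1) (ECst a)) tz_of) (EAtom U [VX]))
  (EAtom U [VZ])) (EMul f2 (EAtom U [])).
Definition lhs1 := EAdd (ESub (EAtom W [VZ]) (EMul (EMul (ECst a) m_of) (EAtom W [VX])))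
  (EMul f1 (EAtom W [])).
Definition lhs2 := EAdd (EAdd (EAtom W [VT]) (EMul (EMul (ECst a) tz_of) (EAtom W [VX])))
  (EMul f2 (EAtom W [])).
Definition cPx := EMul (ECst a) m_of.
Definition cP0 := EOpp f1.
Definition cQx := EOpp (EMul (ECst a) tz_of).
Definition cQ0 := EOpp f2.
Definition Pz := EAdd (EAdd (EMul cPx (EAtom W [VX])) (EMul cP0 (EAtom W []))) rhs1.
Definition Qt := EAdd (EAdd (EMul cQx (EAtom W [VX])) (EMul cQ0 (EAtom W []))) rhs2.
Definition eq_star :=
  ESub (ESub (EAdd (dexpr VT m_of) (EMul (EMul (ECst a) m_of) (dexpr VX n_of))) (dexpr VZ n_of))
    (EMul (EMul (ECst a) n_of) (dexpr VX m_of)).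
Definition ell := ESub (ESub (ESub (EAdd (EAdd (dexpr VT delta_m)
  (EMul (EMul (ECst a) delta_m) (dexpr VX n_of))) (EMul (EMul (ECst a) m_of) (dexpr VX delta_n)))
  (dexpr VZ delta_n)) (EMul (EMul (ECst a) delta_n) (dexpr VX m_of)))
  (EMul (EMul (ECst a) n_of) (dexpr VX delta_m)).
Definition compat_expr :=
  ESub (EAdd (EAdd (EAdd (EAdd (EMul (dexpr VT cPx) (EAtom W [VX])) (EMul cPx (dexpr VX Qt)))
        (EMul (dexpr VT cP0) (EAtom W []))) (EMul cP0 Qt)) (dexpr VT rhs1))
      (EAdd (EAdd (EAdd (EAdd (EMul (dexpr VZ cQx) (EAtom W [VX])) (EMul cQx (dexpr VX Pz)))
        (EMul (dexpr VZ cQ0) (EAtom W []))) (EMul cQ0 Pz)) (dexpr VZ rhs2)).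
Definition res1 := ESub lhs1 rhs1.
Definition res2 := ESub lhs2 rhs2.
End Exprs.
End Reified.

Ltac expand_expr :=
  cbn [wf_at eval dexpr insert_var var_rank Nat.leb iter_pd fold_right pred INR
       Reified.ux Reified.m_of Reified.n_of Reified.tz_of Reified.delta_m Reified.delta_n
       Reified.f1 Reified.f2 Reified.rhs1 Reified.rhs2 Reified.lhs1 Reified.lhs2
       Reified.cPx Reified.cP0 Reified.cQx Reified.cQ0 Reified.Pz Reified.Qt
       Reified.eq_star Reified.ell Reified.compat_expr Reified.res1 Reified.res2] in *;
  unfold PDx, PDy, PDz, PDt in *.

Lemma compat_certificate a u U W x y z t : PDx u x y z t <> 0 ->
  eval (Reified.compat_expr a u U W) x y z t =
  PDx u x y z t * (eval (Reified.ell a u U) x y z t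
    + a * eval (xbracket (EDiv (ESub (EAtom U []) (EAtom W [])) (Reified.ux u))
                         (Reified.eq_star a u)) x y z t).
Proof. intros Hux. unfold xbracket. expand_expr. field. exact Hux. Qed.

Lemma ell_certificate a u U V x y z t : PDx u x y z t <> 0 ->
  eval (Reified.ell a u V) x y z t =
  (eval (dexpr VY (Reified.res2 a u U V)) x y z t - eval (dexpr VZ (Reified.res1 a u U V)) x y z t
   + (1 + a) * (eval (Reified.n_of u) x y z t * eval (dexpr VX (Reified.res1 a u U V)) x y z t
                - eval (Reified.m_of u) x y z t * eval (dexpr VX (Reified.res2 a u U V)) x y z t)
   - eval (Reified.f2 a u) x y z t * eval (Reified.res1 a u U V) x y z t
   + eval (Reified.f1 a u) x y z t * eval (Reified.res2 a u U V) x y z t) / PDx u x y z t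
  + (1 + a) * eval (xbracket (EDiv (ESub (EAtom V []) (EAtom U [])) (Reified.ux u))
                            (Reified.eq_star a u)) x y z t.
Proof. intros Hux. unfold xbracket. expand_expr. field. exact Hux. Qed.

Section Recursion.
Variables (alpha : R) (O : R -> R -> R -> R -> Prop) (u : fn).
Hypotheses (HO : open4 O) (Hu : smooth_on O u)
  (Hux : forall x y z t, O x y z t -> PDx u x y z t <> 0).

Ltac solve_wf :=
  expand_expr; repeat match goal with |- _ /\ _ => split end; try exact I; try assumption;
  repeat first [apply pow_nonzero | apply Rmult_integral_contrapositive_currified];
  assumption.

Lemma eq_star_eval x y z t : O x y z t ->
  eq_star alpha u x y z t = eval (Reified.eq_star alpha u) x y z t.
Proof.
  intros Hp. assert (Hp' := Hux x y z t Hp). unfold eq_star.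
  change (m_of u) with (eval (Reified.m_of u)). change (n_of u) with (eval (Reified.n_of u)).
  unfold PDt, PDx, PDz. rewrite !(pd_eval O) by solve_wf. reflexivity.
Qed.

Lemma ell_eval U x y z t : smooth_on O U -> O x y z t ->
  ell alpha u U x y z t = eval (Reified.ell alpha u U) x y z t.
Proof.
  intros HU Hp. assert (Hp' := Hux x y z t Hp). unfold ell.
  change (m_of u) with (eval (Reified.m_of u)). change (n_of u) with (eval (Reified.n_of u)).
  change (delta_m u U) with (eval (Reified.delta_m u U)).
  change (delta_n u U) with (eval (Reified.delta_n u U)).
  unfold PDt, PDx, PDz. rewrite !(pd_eval O) by solve_wf. reflexivity.
Qed.

Lemma compat_expr_eval U W x y z t : smooth_on O U -> smooth_on O W -> O x y z t ->
  compat_expr alpha u U W x y z t = eval (Reified.compat_expr alpha u U W) x y z t.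
Proof.
  intros HU HW Hp. assert (Hp' := Hux x y z t Hp). unfold compat_expr.
  change (cPx alpha u) with (eval (Reified.cPx alpha u)).
  change (cP0 alpha u) with (eval (Reified.cP0 alpha u)).
  change (cQx alpha u) with (eval (Reified.cQx alpha u)).
  change (cQ0 alpha u) with (eval (Reified.cQ0 alpha u)).
  change (Qt alpha u U W) with (eval (Reified.Qt alpha u U W)).
  change (Pz alpha u U W) with (eval (Reified.Pz alpha u U W)).
  change (rhs1 alpha u U) with (eval (Reified.rhs1 alpha u U)).
  change (rhs2 alpha u U) with (eval (Reified.rhs2 alpha u U)).
  unfold PDt, PDx, PDz. rewrite !(pd_eval O) by solve_wf. reflexivity.
Qed.

Hypothesis HE : forall x y z t, O x y z t -> eq_star alpha u x y z t = 0.

Lemma eq_star_expr_vanish x y z t : O x y z t -> eval (Reified.eq_star alpha u) x y z t = 0.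
Proof. intros Hp. rewrite <- eq_star_eval; auto. Qed.

Lemma compat_expr_vanish U W x y z t : smooth_on O U -> smooth_on O W ->
  (forall x y z t, O x y z t -> ell alpha u U x y z t = 0) -> O x y z t ->
  compat_expr alpha u U W x y z t = 0.
Proof.
  intros HU HW HL Hp. assert (Hp' := Hux x y z t Hp).
  rewrite compat_expr_eval, compat_certificate, <- ell_eval, HL by assumption.
  rewrite (xbracket_vanish_on O) by (solve_wf || apply eq_star_expr_vanish). ring.
Qed.

Lemma ell_vanish U V x y z t : smooth_on O U -> smooth_on O V ->
  (forall x y z t, O x y z t ->
     lhs1 alpha u V x y z t = rhs1 alpha u U x y z t /\
     lhs2 alpha u V x y z t = rhs2 alpha u U x y z t) -> O x y z t ->
  ell alpha u V x y z t = 0.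
Proof.
  intros HU HV HS Hp. assert (Hp' := Hux x y z t Hp).
  assert (Hres1 : forall X Y Z T, O X Y Z T -> eval (Reified.res1 alpha u U V) X Y Z T = 0).
  { intros X Y Z T HQ. change (lhs1 alpha u V X Y Z T - rhs1 alpha u U X Y Z T = 0).
    rewrite (proj1 (HS X Y Z T HQ)). ring. }
  assert (Hres2 : forall X Y Z T, O X Y Z T -> eval (Reified.res2 alpha u U V) X Y Z T = 0).
  { intros X Y Z T HQ. change (lhs2 alpha u V X Y Z T - rhs2 alpha u U X Y Z T = 0).
    rewrite (proj2 (HS X Y Z T HQ)). ring. }
  rewrite ell_eval, (ell_certificate alpha u U V) by assumption.
  rewrite !(dexpr_vanish_on O _ (Reified.res1 alpha u U V)),
          !(dexpr_vanish_on O _ (Reified.res2 alpha u U V)), Hres1, Hres2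
    by (assumption || solve_wf).
  rewrite (xbracket_vanish_on O) by (solve_wf || apply eq_star_expr_vanish).
  field. exact Hp'.
Qed.

End Recursion.

Theorem mainTheorem2 :
  forall (alpha : R) (O : R -> R -> R -> R -> Prop) (u U : fn),
    open4 O ->
    smooth_on O u ->
    (forall x y z t, O x y z t -> PDx u x y z t <> 0) ->
    (forall x y z t, O x y z t -> eq_star alpha u x y z t = 0) ->
    smooth_on O U ->
    (forall x y z t, O x y z t -> ell alpha u U x y z t = 0) ->
    (forall W : fn, smooth_on O W ->
       forall x y z t, O x y z t -> compat_expr alpha u U W x y z t = 0)
    /\
    (forall Ut : fn, smooth_on O Ut ->
       (forall x y z t, O x y z t ->
          lhs1 alpha u Ut x y z t = rhs1 alpha u U x y z t /\
          lhs2 alpha u Ut x y z t = rhs2 alpha u U x y z t) ->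
       forall x y z t, O x y z t -> ell alpha u Ut x y z t = 0).
Proof.
  intros alpha O u U HO Hu Hux HE HU HL. split.
  - intros W HW x y z t Hp.
    exact (compat_expr_vanish alpha O u HO Hu Hux HE U W x y z t HU HW HL Hp).
  - intros Ut HUt HS x y z t Hp.
    exact (ell_vanish alpha O u HO Hu Hux HE U Ut x y z t HU HUt HS Hp).
Qed.
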